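(* For every 1-2-metric and every $\alpha>0$, the greedy-routing network creation game on it with edge price $\alpha$ admits no best response cycle.
   Context: A 1-2-metric is a finite metric space $(\mathcal{P},d)$ with $d(u,v)\in\{1,2\}$ for all distinct $u,v$. Game: agents are the points of $\mathcal{P}$; agent $u$'s strategy is $S_u\subseteq\mathcal{P}\setminus\{u\}$; a profile $\mathbf{s}$ defines the directed network with arcs $(u,v)$, $v\in S_u$, of length $d(u,v)$. A greedy path from $u$ to $v$ is a directed path $u=x_1,\dots,x_j=v$ of arcs with $d(x_i,v)>d(x_{i+1},v)$ for all $i$. $\mathrm{stretch}(u,v)$ is the minimum length of a greedy path from $u$ to $v$ divided by $d(u,v)$, or a fixed sufficiently large penalty constant $Z$ if none exists. Cost: $c_u(\mathbf{s})=\sum_{v\ne u}\mathrm{stretch}(u,v)+\alpha|S_u|$. A best response of $u$ to $\mathbf{s}$ is a strategy minimizing $c_u(\cdot,\mathbf{s}_{-u})$. A best response cycle is a sequence of profiles $\mathbf{s}_0,\dots,\mathbf{s}_k=\mathbf{s}_0$ ($k\ge1$) where each $\mathbf{s}_i$ arises from $\mathbf{s}_{i-1}$ by a single agent switching to a best response that strictly decreases its cost. *)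

From HB Require Import structures.
From mathcomp Require Import all_boot all_order all_algebra.
From Stdlib Require Import ClassicalEpsilon.
Set Implicit Arguments. Unset Strict Implicit. Unset Printing Implicit Defensive.
Import Order.TTheory GRing.Theory Num.Theory.

Definition decP (P : Prop) : bool :=
  if excluded_middle_informative P then true else false.

Lemma decPP (P : Prop) : P -> decP P.
Proof. by rewrite /decP; case: excluded_middle_informative. Qed.

Section Game.
Variable T : finType.
Variable d : T -> T -> nat.

Definition is_12metric : Prop :=
  [/\ forall u, d u u = 0%N,
      forall u v, d u v = d v u,
      forall u v w, (d u w <= d u v + d v w)%N &
      forall u v, u != v -> d u v = 1%N \/ d u v = 2%N].

Definition profile := {ffun T -> {set T}}.

Definition valid_strategy (u : T) (S : {set T}) : bool := u \notin S.
Definition valid_profile (s : profile) : Prop := forall u, valid_strategy u (s u).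

(* Greedy path towards target v: the seq p lists x_2,...,x_j after the start
   x_1 = u; consecutive vertices are joined by an arc (y \in S_x) and
   d(x_i,v) > d(x_{i+1},v). *)
Definition greedy_step (s : profile) (v : T) : rel T :=
  fun x y => (y \in s x) && (d y v < d x v)%N.

Definition greedy_path (s : profile) (u v : T) (p : seq T) : bool :=
  path (greedy_step s v) u p && (last u p == v).

Definition path_len (u : T) (p : seq T) : nat :=
  sumn (pairmap d u p).

Definition greedy_len (s : profile) (u v : T) (n : nat) : Prop :=
  exists p, greedy_path s u v p /\ path_len u p = n.

Lemma greedy_len_ex (s : profile) (u v : T) :
  (exists n, greedy_len s u v n) -> exists n, decP (greedy_len s u v n).
Proof. by case=> n Hn; exists n; apply: decPP. Qed.

Definition greedy_dist (s : profile) (u v : T) : option nat :=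
  match excluded_middle_informative (exists n, greedy_len s u v n) with
  | left H => Some (ex_minn (greedy_len_ex H))
  | right _ => None
  end.

Variable R : realFieldType.
Variables (alpha Z : R).

Local Open Scope ring_scope.

Definition stretch (s : profile) (u v : T) : R :=
  match greedy_dist s u v with
  | Some n => n%:R / (d u v)%:R
  | None => Z
  end.

Definition cost (s : profile) (u : T) : R :=
  \sum_(v | v != u) stretch s u v + alpha * #|s u|%:R.

Definition update (s : profile) (u : T) (S : {set T}) : profile :=
  [ffun w => if w == u then S else s w].

Definition best_response (s : profile) (u : T) (S : {set T}) : Prop :=
  valid_strategy u S /\
  forall S', valid_strategy u S' -> cost (update s u S) u <= cost (update s u S') u.

Definition br_move (s s' : profile) : Prop :=
  exists u S, best_response s u S /\ s' = update s u S /\ cost s' u < cost s u.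

Definition br_cycle : Prop :=
  exists (k : nat) (ss : nat -> profile),
    (1 <= k)%N /\ valid_profile (ss 0%N) /\ ss k = ss 0%N /\
    forall i, (i < k)%N -> br_move (ss i) (ss i.+1).

End Game.

From Pilot Require Import Defs.
From mathcomp Require Import all_boot all_order all_algebra.
From mathcomp Require Import zify lra.
From Stdlib Require Import ClassicalEpsilon.
Set Implicit Arguments. Unset Strict Implicit. Unset Printing Implicit Defensive.
Import Order.TTheory GRing.Theory Num.Theory.
Local Open Scope ring_scope.

(* In a 1-2-metric every greedy step towards v lowers d(., v) by at least one,
   so a greedy path from u to v has at most two arcs, and after the first arc
   it can only use an arc x -> v with d(x, v) = 1.  Hence the cost of u depends
   only on its own strategy and on the unit-length arcs of the other agents.
   Once Z > alpha + 1, a best response contains every unit-length arc of the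
   agent, so along a best response cycle the unit-length arcs of every agent
   never change: an agent that moves at all is saturated at the end of the
   cycle, i.e. at its start, and stays saturated.  Along the cycle the game is
   therefore an exact potential game with potential the sum of the costs
   [u |-> cost of u's current strategy against the initial profile], which
   strictly decreases at each move, a contradiction. *)

Lemma decP_sound (P : Prop) : Defs.decP P -> P.
Proof. by rewrite /Defs.decP; case: excluded_middle_informative. Qed.

Lemma update_self (T : finType) (s : profile T) u S : update s u S u = S.
Proof. by rewrite ffunE eqxx. Qed.

Lemma update_other (T : finType) (s : profile T) u S w :
  w != u -> update s u S w = s w.
Proof. by rewrite ffunE => /negbTE ->. Qed.

Lemma ltr_chain_nat (R : realFieldType) (phi : nat -> R) k :
  (0 < k)%N -> (forall i, (i < k)%N -> phi i.+1 < phi i) -> phi k < phi 0%N.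
Proof.
move=> k_gt0 phi_dec.
apply: (@homo_ltn_in _ [pred i | i <= k]%N phi (fun x y => y < x)) => //.
- by move=> y x z yx zy; exact: lt_trans zy yx.
- move=> i j _ /= j_le_k m /andP[_ lt_mj].
  exact: leq_trans (ltnW lt_mj) j_le_k.
- by move=> i _ /= /phi_dec.
- by rewrite inE /=.
Qed.

Lemma closed_loop_stable_or_always (A : Type) (P : A -> Prop) (x : nat -> A) k :
  x k = x 0%N -> (forall i, (i < k)%N -> x i.+1 = x i \/ P (x i.+1)) ->
  (forall i, (i <= k)%N -> x i = x 0%N) \/ (forall i, (i <= k)%N -> P (x i)).
Proof.
move=> x_k x_step.
have stable_or_P n : (n <= k)%N -> (forall i, (i <= n)%N -> x i = x 0%N) \/ P (x n).
  elim: n => [|n IH] le_nk; first by left; case.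
  have [x_n | ] := x_step n le_nk; last by right.
  have [const | P_n] := IH (ltnW le_nk); last by right; rewrite x_n.
  by left=> i; rewrite leq_eqVlt ltnS => /predU1P[-> | /const //]; rewrite x_n const.
have [const | P_k] := stable_or_P k (leqnn k); [by left | right].
elim=> [|i IH] lt_ik; first by rewrite -x_k.
by have [-> | //] := x_step i lt_ik; apply: IH (ltnW lt_ik).
Qed.

Section OneTwoMetric.
Variable T : finType.
Variable d : T -> T -> nat.
Hypothesis d12 : is_12metric d.

Lemma dist_xx x : d x x = 0%N.
Proof. by case: d12. Qed.

Lemma dist_le2 x y : (d x y <= 2)%N.
Proof.
case: d12 => _ _ _ d_neq; have [-> | /d_neq[] ->] := eqVneq x y => //.
by rewrite dist_xx.
Qed.

Lemma dist_gt0 x y : x != y -> (0 < d x y)%N.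
Proof. by case: d12 => _ _ _ d_neq /d_neq[] ->. Qed.

Lemma dist_unit_neq x y : d x y = 1%N -> x != y.
Proof. by move=> dxy; apply/eqP => exy; rewrite exy dist_xx in dxy. Qed.

Definition unit_saturated (w : T) (S : {set T}) : Prop :=
  forall y, d w y = 1%N -> y \in S.

Definition unit_arcs_agree (s s' : profile T) (w : T) : Prop :=
  forall y, d w y = 1%N -> (y \in s w) = (y \in s' w).

Lemma greedy_pathP s u v p : u != v -> greedy_path d s u v p ->
  p = [:: v] /\ greedy_step d s v u v \/
  exists2 x, p = [:: x; v] & greedy_step d s v u x /\ greedy_step d s v x v.
Proof.
move=> /negbTE u_neq_v; case: p => [|x [|y [|z p]]]; rewrite /greedy_path /=.
- by rewrite u_neq_v.
- by rewrite andbT => /andP[step_ux /eqP x_v]; left; subst x.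
- by rewrite andbT => /andP[/andP[step_ux step_xy] /eqP y_v]; right; exists x; subst y.
- case/andP=> /and4P[/andP[_ lt_xu] /andP[_ lt_yx] /andP[_ lt_zy] _] _.
  by have := dist_le2 u v; lia.
Qed.

Lemma greedy_len_le s u v n : u != v -> greedy_len d s u v n -> (n <= 2 * d u v)%N.
Proof.
move=> u_neq_v [p [/(greedy_pathP u_neq_v)[[-> _] | [x -> [/andP[_ lt_xu] _]]] <-]].
  by rewrite /path_len /=; lia.
by rewrite /path_len /=; have := dist_le2 u x; have := dist_le2 x v; lia.
Qed.

Lemma greedy_len_transfer (s s' : profile T) u v n : u != v -> s u = s' u ->
  (forall w, w != u -> unit_arcs_agree s s' w) ->
  greedy_len d s u v n -> greedy_len d s' u v n.
Proof.
move=> u_neq_v s_u agree [p [p_greedy <-]]; exists p; split => //.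
rewrite /greedy_path.
case: (greedy_pathP u_neq_v p_greedy) => [[-> step_uv] | [x -> [step_ux]]].
  by move: step_uv; rewrite /= /greedy_step -s_u eqxx !andbT.
case/andP=> v_in lt_vx; move: (step_ux) => /andP[x_in lt_xu].
have dxv : d x v = 1%N by have := dist_le2 u v; rewrite dist_xx in lt_vx; lia.
have x_neq_u : x != u by apply: contraTneq lt_xu => ->; rewrite ltnn.
by rewrite /= /greedy_step -s_u x_in lt_xu -agree // v_in lt_vx eqxx.
Qed.

Lemma greedy_len_subset (s s' : profile T) u v n : (forall w, s w \subset s' w) ->
  greedy_len d s u v n -> greedy_len d s' u v n.
Proof.
move=> sub [p [/andP[p_path p_end] p_len]]; exists p; split => //.
rewrite /greedy_path p_end andbT; apply: sub_path p_path => x y /andP[y_in lt_yx].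
by rewrite /greedy_step (subsetP (sub x)).
Qed.

Lemma greedy_distP (s : profile T) u v :
  match greedy_dist d s u v with
  | Some n => greedy_len d s u v n /\ forall m, greedy_len d s u v m -> (n <= m)%N
  | None => forall n, ~ greedy_len d s u v n
  end.
Proof.
rewrite /greedy_dist; case: excluded_middle_informative => [exP | no_len].
  case: ex_minnP => n /decP_sound len_n n_min; split=> // m len_m.
  exact/n_min/decPP.
by move=> n len_n; apply: no_len; exists n.
Qed.

Lemma greedy_dist_mono (s s' : profile T) u v n :
  (forall m, greedy_len d s u v m -> greedy_len d s' u v m) ->
  greedy_dist d s u v = Some n -> exists2 m, greedy_dist d s' u v = Some m & (m <= n)%N.
Proof.
move=> sub dist_n; have := greedy_distP s u v; rewrite dist_n => -[len_n _].
have := greedy_distP s' u v; case: greedy_dist => [m [_ m_min] | no_len].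
  by exists m => //; apply/m_min/sub.
by case: (no_len n (sub n len_n)).
Qed.

Section Costs.
Variables (R : realFieldType) (alpha Z : R).
Hypothesis Z_ge2 : 2 <= Z.

Lemma stretch_le (s s' : profile T) u v : u != v ->
  (forall n, greedy_len d s u v n -> greedy_len d s' u v n) ->
  stretch d Z s' u v <= stretch d Z s u v.
Proof.
move=> u_neq_v sub; have duv_gt0 : 0 < (d u v)%:R :> R by rewrite ltr0n dist_gt0.
rewrite /stretch; case dist_n: (greedy_dist d s u v) => [n|].
  have [m -> le_mn] := greedy_dist_mono sub dist_n.
  by rewrite ler_wpM2r ?invr_ge0 ?ler0n ?ler_nat.
have := greedy_distP s' u v; case: greedy_dist => [m [len_m _]|//].
have le_m : m%:R <= 2 * (d u v)%:R :> R.
  by rewrite -natrM ler_nat (greedy_len_le u_neq_v len_m).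
rewrite ler_pdivrMr //; apply: le_trans le_m _.
by rewrite ler_pM2r.
Qed.

Lemma cost_eq (s s' : profile T) u : s u = s' u ->
  (forall w, w != u -> unit_arcs_agree s s' w) ->
  cost d alpha Z s u = cost d alpha Z s' u.
Proof.
move=> s_u agree; rewrite /cost s_u; congr (_ + _); apply: eq_bigr => v v_neq_u.
rewrite eq_sym in v_neq_u.
apply/le_anti; rewrite !stretch_le // => n; apply: greedy_len_transfer => //.
by move=> w /agree agree_w y /agree_w.
Qed.

Lemma stretch_unit_absent (s : profile T) u y :
  d u y = 1%N -> y \notin s u -> stretch d Z s u y = Z.
Proof.
move=> duy y_notin; rewrite /stretch; have := greedy_distP s u y.
case: greedy_dist => [n [[p [/(greedy_pathP (dist_unit_neq duy)) p_shape _]] _]|//].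
case: p_shape => [[_ /andP[y_in _]] | [x _ [/andP[_ lt_xu] /andP[_ lt_yx]]]].
  by rewrite y_in in y_notin.
by rewrite dist_xx in lt_yx; lia.
Qed.

Lemma stretch_unit_arc (s : profile T) u y :
  d u y = 1%N -> y \in s u -> stretch d Z s u y <= 1.
Proof.
move=> duy y_in; have len_1 : greedy_len d s u y 1.
  exists [:: y]; split; last by rewrite /path_len /= duy.
  by rewrite /greedy_path /= /greedy_step y_in duy dist_xx eqxx.
rewrite /stretch; have := greedy_distP s u y.
case: greedy_dist => [m [_ m_min] | no_len]; last by case: (no_len 1%N).
by rewrite duy divr1 lern1 m_min.
Qed.

Hypothesis alpha_lt : alpha + 1 < Z.

Lemma best_response_saturated (s : profile T) u S :
  best_response d alpha Z s u S -> unit_saturated u S.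
Proof.
move=> [S_valid S_best] y duy; apply/negPn/negP => y_notin.
have y_neq_u : y != u by rewrite eq_sym dist_unit_neq.
have S'_valid : valid_strategy u (y |: S).
  by rewrite /valid_strategy in_setU1 negb_or eq_sym y_neq_u.
have := S_best _ S'_valid; apply/negP; rewrite -ltNge.
set s1 := update s u S; set s2 := update s u (y |: S).
have sub w : s1 w \subset s2 w.
  by rewrite !ffunE; case: eqP => _; [apply: subsetUr | apply: subxx].
have rest : \sum_(v | (v != u) && (v != y)) stretch d Z s2 u v <=
            \sum_(v | (v != u) && (v != y)) stretch d Z s1 u v.
  apply: ler_sum => v /andP[v_neq_u _].
  by apply: stretch_le; [rewrite eq_sym | move=> n; apply: greedy_len_subset].
have st1 : stretch d Z s1 u y = Z by rewrite stretch_unit_absent ?update_self.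
have st2 : stretch d Z s2 u y <= 1.
  by rewrite stretch_unit_arc ?update_self ?setU11.
rewrite /cost !update_self cardsU1 (negbTE y_notin) natrD mulrDr mulr1.
rewrite !(bigD1 y y_neq_u) /= st1 addrA ltrD2r addrAC addrC [Z + _]addrC.
apply: ler_ltD rest (le_lt_trans _ alpha_lt).
by rewrite addrC lerD2l.
Qed.

Lemma br_move_stable_or_saturated (s s' : profile T) w :
  br_move d alpha Z s s' -> s' w = s w \/ unit_saturated w (s' w).
Proof.
case=> u [S [br [-> _]]]; have [-> | w_neq_u] := eqVneq w u.
  by right; rewrite update_self; apply: best_response_saturated br.
by left; apply: update_other.
Qed.

Section BestResponseCycle.
Variables (k : nat) (ss : nat -> profile T).
Hypothesis ss_k : ss k = ss 0%N.
Hypothesis ss_move : forall i, (i < k)%N -> br_move d alpha Z (ss i) (ss i.+1).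

Lemma cycle_unit_arcs_agree i w : (i <= k)%N -> unit_arcs_agree (ss i) (ss 0%N) w.
Proof.
have [const | sat] := closed_loop_stable_or_always (P := unit_saturated w)
  (congr1 (fun s : profile T => s w) ss_k)
  (fun i lt_ik => br_move_stable_or_saturated w (ss_move lt_ik)).
  by move=> le_ik y _; rewrite const.
by move=> le_ik y dwy; rewrite (sat i le_ik y dwy) (sat 0%N (leq0n k) y dwy).
Qed.

Lemma cycle_cost i u : (i <= k)%N ->
  cost d alpha Z (ss i) u = cost d alpha Z (update (ss 0%N) u (ss i u)) u.
Proof.
move=> le_ik; apply: cost_eq; first by rewrite update_self.
by move=> w w_neq_u y dwy; rewrite update_other // cycle_unit_arcs_agree.
Qed.

Definition cycle_potential i := \sum_w cost d alpha Z (update (ss 0%N) w (ss i w)) w.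

Lemma cycle_potential_lt i : (i < k)%N -> cycle_potential i.+1 < cycle_potential i.
Proof.
move=> lt_ik; have [u [S [_ [ss_i1 cost_lt]]]] := ss_move lt_ik.
rewrite /cycle_potential (bigD1 u) //= [X in _ < X](bigD1 u) //=.
rewrite (eq_bigr (fun w => cost d alpha Z (update (ss 0%N) w (ss i w)) w)); last first.
  by move=> w w_neq_u; rewrite ss_i1 update_other.
by rewrite ltrD2r -!cycle_cost // ltnW.
Qed.

End BestResponseCycle.

Lemma no_br_cycle : ~ br_cycle d alpha Z.
Proof.
case=> k [ss [k_gt0 [_ [ss_k ss_move]]]].
have := ltr_chain_nat k_gt0 (cycle_potential_lt ss_k ss_move).
by rewrite /cycle_potential ss_k ltxx.
Qed.

End Costs.
End OneTwoMetric.

Theorem theorem2p10 (T : finType) (d : T -> T -> nat) (R : realFieldType) (alpha : R) :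
  is_12metric d -> 0 < alpha ->
  exists Z0 : R, forall Z : R, Z0 <= Z -> ~ br_cycle d alpha Z.
Proof.
move=> d12 alpha_gt0; exists (alpha + 2) => Z le_Z.
by apply: no_br_cycle => //; lra.
Qed.
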